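(* Consider the P-SSD algorithm described in the context, executed over a constant (time-invariant) strongly connected digraph $G$ with diameter $d$, and let $C_{\mathrm{SSD}}=\mathrm{SSD}(D(X),D(Y))$. Then: (a) for all $k\ge d+1$ and all $i\in\{1,\dots,M\}$, $\mathcal{R}(C_k^i)=\mathcal{R}(C_{\mathrm{SSD}})$ and $\mathcal{R}(D(X)C_k^i)=\mathcal{R}(D(Y)C_k^i)$; (b) $\mathrm{flag}_{d+2}^i=1$ for each $i\in\{1,\dots,M\}$.
   Context: Data setting: a map $T:\mathcal{M}\to\mathcal{M}$, $\mathcal{M}\subseteq\mathbb{R}^n$; a dictionary $D(x)=[d_1(x),\dots,d_{N_d}(x)]$ of real-valued functions on $\mathcal{M}$; data matrices $X,Y\in\mathbb{R}^{N\times n}$ whose $i$-th rows $x_i^T,y_i^T$ satisfy $y_i=T(x_i)$; $D(X)\in\mathbb{R}^{N\times N_d}$ is the matrix with rows $D(x_1),\dots,D(x_N)$ (similarly $D(Y)$). Assumption: $D(X)$ and $D(Y)$ have full column rank. There are $M$ agents; agent $i$ holds local dictionary snapshots $D(X_i),D(Y_i)$ (obtained from a subset of the snapshot pairs) such that the union over $i$ of the rows of $[D(X_i),D(Y_i)]$ equals the set of rows of $[D(X),D(Y)]$. There are signature matrices $D(X_s),D(Y_s)$ with full column rank such that the rows of $[D(X_s),D(Y_s)]$ are contained in the rows of $[D(X_i),D(Y_i)]$ for every $i$. SSD algorithm: given $A,B\in\mathbb{R}^{m\times q}$, set $A_1=A$, $B_1=B$, $C=I_q$, and iterate: let $[Z^A_j;Z^B_j]$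 be a matrix whose columns form a basis of the null space of $[A_j,B_j]$ (with $Z^A_j$ having as many rows as $A_j$ has columns); if the null space is trivial return $0$; if the number of rows of $Z^A_j$ is at most its number of columns, return $C$; otherwise set $C\leftarrow CZ^A_j$, $A_{j+1}=A_jZ^A_j$, $B_{j+1}=B_jZ^A_j$. Its output is denoted $\mathrm{SSD}(A,B)$. P-SSD algorithm: at iteration $k\ge1$ the digraph $G_k$ is used; an edge $(j,i)\in E_k$ means $j$ is an in-neighbor of $i$, and $\mathcal{N}_{\mathrm{in}}^k(i)$ denotes the in-neighbors of $i$ in $G_k$. Each agent $i$ sets $C_0^i=I_{N_d}$, $\mathrm{flag}_0^i=0$, and for $k=1,2,\dots$: receives $C_{k-1}^j$ for $j\in\mathcal{N}_{\mathrm{in}}^k(i)$; sets $D_k^i=\mathrm{basis}\big(\bigcap_{j\in\{i\}\cup\mathcal{N}_{\mathrm{in}}^k(i)}\mathcal{R}(C_{k-1}^j)\big)$; sets $E_k^i=\mathrm{SSD}(D(X_i)D_k^i,D(Y_i)D_k^i)$; if the number of columns of $D_k^iE_k^i$ is strictly less than that of $C_{k-1}^i$, sets $C_k^i=D_k^iE_k^i$ and $\mathrm{flag}_k^i=0$; otherwise sets $C_k^i=C_{k-1}^i$ and $\mathrm{flag}_k^i=1$; then transmits $C_k^i$ to its out-neighbors. Here $\mathrm{basis}(\mathcal{A})$ returns a matrix whose columns form a basis of the subspace $\mathcal{A}$, and returns $0$ if $\mathcal{A}=\{0\}$; the matrix $0$ is regarded as having $0$ columns. $\mathcal{R}(\cdot)$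 denotes range space. A digraph is strongly connected if there is a directed path from every node to every other node; its diameter is the maximum over ordered pairs of nodes of the length of a shortest directed path between them. *)

From HB Require Import structures.
From mathcomp Require Import all_boot all_order all_algebra.
From mathcomp Require Import reals.
Set Implicit Arguments. Unset Strict Implicit. Unset Printing Implicit Defensive.
Import GRing.Theory Num.Theory.
Local Open Scope ring_scope.

Definition in_range (R : fieldType) (n p : nat) (C : 'M[R]_(n, p)) (v : 'cV[R]_n) : Prop :=
  exists c : 'cV[R]_p, v = C *m c.

Definition range_eq (R : fieldType) (n p1 p2 : nat)
  (C1 : 'M[R]_(n, p1)) (C2 : 'M[R]_(n, p2)) : Prop :=
  forall v : 'cV[R]_n, in_range C1 v <-> in_range C2 v.

Definition lin_indep_cols (R : fieldType) (s p : nat) (Z : 'M[R]_(s, p)) : Prop :=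
  forall c : 'cV[R]_p, Z *m c = 0 -> c = 0.

Definition basis_of (R : fieldType) (s p : nat) (S : 'cV[R]_s -> Prop) (Z : 'M[R]_(s, p)) : Prop :=
  lin_indep_cols Z /\ (forall v : 'cV[R]_s, S v <-> in_range Z v).

Definition nullspace_basis (R : fieldType) (r s p : nat) (M : 'M[R]_(r, s)) (Z : 'M[R]_(s, p)) : Prop :=
  basis_of (fun v => M *m v = 0) Z.

Definition full_col_rank (R : fieldType) (m q : nat) (A : 'M[R]_(m, q)) : Prop :=
  \rank A = q.

Definition rows_in (R : Type) (m1 m2 q : nat) (A : 'M[R]_(m1, q)) (B : 'M[R]_(m2, q)) : Prop :=
  forall j : 'I_m1, exists k : 'I_m2, row j A = row k B.

(* ---------- The SSD algorithm (as a relation: any choice of null-space bases) ----------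
   ssd_run C A B res : starting from the current state (C, A_j = A, B_j = B),
   the algorithm may return res.  Returned matrices are packed with their
   number of columns; "return 0" is the matrix with 0 columns. *)
Inductive ssd_run (R : fieldType) (m q0 : nat) :
  forall q : nat, 'M[R]_(q0, q) -> 'M[R]_(m, q) -> 'M[R]_(m, q) -> {p : nat & 'M[R]_(q0, p)} -> Prop :=
| SSD_trivial q (C : 'M[R]_(q0, q)) (A B : 'M[R]_(m, q)) :
    (forall v : 'cV[R]_(q + q), row_mx A B *m v = 0 -> v = 0) ->
    ssd_run C A B (existT _ 0%N (0 : 'M[R]_(q0, 0)))
| SSD_stop q (C : 'M[R]_(q0, q)) (A B : 'M[R]_(m, q)) p (Z : 'M[R]_(q + q, p)) :
    (0 < p)%N -> nullspace_basis (row_mx A B) Z -> (q <= p)%N ->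
    ssd_run C A B (existT _ q C)
| SSD_step q (C : 'M[R]_(q0, q)) (A B : 'M[R]_(m, q)) p (Z : 'M[R]_(q + q, p)) res :
    (0 < p)%N -> nullspace_basis (row_mx A B) Z -> (p < q)%N ->
    ssd_run (C *m usubmx Z) (A *m usubmx Z) (B *m usubmx Z) res ->
    ssd_run C A B res.

Definition SSD (R : fieldType) (m q : nat) (A B : 'M[R]_(m, q)) (res : {p : nat & 'M[R]_(q, p)}) : Prop :=
  ssd_run (1%:M : 'M[R]_q) A B res.

Definition Dmat (R : Type) (n Nd N : nat) (D : 'rV[R]_n -> 'rV[R]_Nd) (X : 'M[R]_(N, n)) : 'M[R]_(N, Nd) :=
  \matrix_(j < N) D (row j X).

(* ---------- Digraphs on the agents 'I_M ----------
   e j i  means that (j,i) is an edge, i.e. j is an in-neighbor of i. *)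
Definition dpath_len (M : nat) (e : rel 'I_M) (i j : 'I_M) (l : nat) : Prop :=
  exists s : seq 'I_M, size s = l /\ path e i s /\ last i s = j.

Definition strongly_connected (M : nat) (e : rel 'I_M) : Prop :=
  forall i j : 'I_M, exists l, dpath_len e i j l.

Definition diameter (M : nat) (e : rel 'I_M) (d : nat) : Prop :=
  (forall i j : 'I_M, exists2 l, (l <= d)%N & dpath_len e i j l) /\
  (exists i j : 'I_M, forall l, (l < d)%N -> ~ dpath_len e i j l).

(* ---------- The P-SSD algorithm over a constant digraph (as a relation) ----------
   C k i : the matrix C_k^i (packed with its number of columns),
   flag k i : flag_k^i (true = 1, false = 0). *)
Definition ncols (R : Type) (n : nat) (C : {p : nat & 'M[R]_(n, p)}) : nat := projT1 C.

Definition PSSD_run (R : fieldType) (Nd M : nat) (e : rel 'I_M)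
  (Nloc : 'I_M -> nat) (DXl DYl : forall i : 'I_M, 'M[R]_(Nloc i, Nd))
  (C : nat -> 'I_M -> {p : nat & 'M[R]_(Nd, p)}) (flag : nat -> 'I_M -> bool) : Prop :=
  (forall i, C 0%N i = existT _ Nd (1%:M : 'M[R]_Nd) /\ flag 0%N i = false) /\
  (forall (k : nat) (i : 'I_M),
     exists (p : nat) (Dk : 'M[R]_(Nd, p)) (Ek : {p' : nat & 'M[R]_(p, p')}),
       basis_of (fun v => forall j : 'I_M, (j = i \/ e j i) -> in_range (projT2 (C k j)) v) Dk /\
       SSD (DXl i *m Dk) (DYl i *m Dk) Ek /\
       (if (projT1 Ek < ncols (C k i))%N
        then C k.+1 i = existT _ (projT1 Ek) (Dk *m projT2 Ek) /\ flag k.+1 i = false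
        else C k.+1 i = C k i /\ flag k.+1 i = true)).

(* Call a subspace S of R^Nd consistent with data (D(X), D(Y)) when
   R(D(Y) S) <= R(D(X) S).  SSD returns a basis of the largest consistent subspace:
   each step passes to a subspace that still contains every consistent one, and it
   stops exactly when the current space is itself consistent.  Hence R(C_1^l) is the
   largest subspace V_l consistent with the local data of agent l.  Every agent holds
   the signature snapshots, whose dictionary matrices have full column rank, so the
   coefficients t with D(Y) s = D(X) t are the same for all agents; therefore
   intersections of the V_l are consistent for each agent involved and, the local
   snapshots covering the global ones, the intersection of all V_l is consistent with
   (D(X), D(Y)).  By induction R(C_{k+1}^i) is the intersection of the V_l over the
   agents l that reach i in at most k steps.  For k >= d this is the intersection of
   all V_l, which is R(C_SSD), and from then on the number of columns no longer
   drops, so the flag is raised. *)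

From Pilot Require Import Defs.
From HB Require Import structures.
From mathcomp Require Import all_boot all_order all_algebra.
From mathcomp Require Import reals.
Import GRing.Theory Num.Theory.
Local Open Scope ring_scope.
Set Implicit Arguments. Unset Strict Implicit.

Section RangeSpaces.
Variable R : fieldType.

Lemma in_rangeE n p (C : 'M[R]_(n, p)) v : in_range C v <-> (v^T <= C^T)%MS.
Proof.
split=> [[c ->]|/submxP [c Hc]]; first by rewrite trmx_mul submxMl.
by exists c^T; rewrite -[v]trmxK Hc trmx_mul trmxK.
Qed.

Lemma range_eqE n p1 p2 (C1 : 'M[R]_(n, p1)) (C2 : 'M[R]_(n, p2)) :
  (C1^T :=: C2^T)%MS -> range_eq C1 C2.
Proof. by move=> eqC v; rewrite !in_rangeE eqC. Qed.

Lemma lin_indep_colsE s p (Z : 'M[R]_(s, p)) : lin_indep_cols Z <-> row_free Z^T.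
Proof.
split=> [Zinj|Zfree c Zc0].
  rewrite -kermx_eq0; apply/eqP/row_matrixP => i; rewrite row0.
  apply: trmx_inj; rewrite trmx0; apply: Zinj.
  by apply: trmx_inj; rewrite trmx_mul trmxK trmx0 -row_mul mulmx_ker row0.
apply: trmx_inj; apply: (row_free_inj Zfree).
by rewrite trmx0 mul0mx -trmx_mul Zc0 trmx0.
Qed.

Lemma full_col_rankE m q (A : 'M[R]_(m, q)) : full_col_rank A <-> row_free A^T.
Proof. by rewrite /full_col_rank /row_free mxrank_tr; split=> /eqP. Qed.

Lemma basis_ofE s p (S : 'cV[R]_s -> Prop) (Z : 'M[R]_(s, p)) r (U : 'M[R]_(r, s)) :
  (forall v, S v <-> (v^T <= U)%MS) -> Defs.basis_of S Z -> row_free Z^T /\ (Z^T :=: U)%MS.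
Proof.
move=> SU [Zindep SZ]; split; first exact/lin_indep_colsE.
apply/eqmxP/andP; split; apply/row_subP => j.
  by rewrite -[row j _]trmxK -SU SZ in_rangeE trmxK row_sub.
by rewrite -[row j _]trmxK -in_rangeE -SZ SU trmxK row_sub.
Qed.

Lemma in_range_bigcap (I : finType) (P : pred I) n (p : I -> nat)
    (C : forall j, 'M[R]_(n, p j)) v :
  (forall j, P j -> in_range (C j) v) <-> (v^T <= \bigcap_(j | P j) <<(C j)^T>>)%MS.
Proof.
split=> [inC|/sub_bigcapmxP inC j Pj].
  by apply/sub_bigcapmxP => j Pj; rewrite genmxE -in_rangeE; apply: inC.
by rewrite in_rangeE -(genmxE (C j)^T) inC.
Qed.

Lemma nullspace_basis_mul0 r s p (A : 'M[R]_(r, s)) (Z : 'M[R]_(s, p)) :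
  nullspace_basis A Z -> A *m Z = 0.
Proof.
case=> _ AZ; apply: trmx_inj; rewrite trmx0; apply/row_matrixP => j.
rewrite row0 trmx_mul row_mul -tr_col -trmx_mul.
by rewrite (proj2 (AZ _)) ?trmx0 // in_rangeE tr_col row_sub.
Qed.

End RangeSpaces.

Section Consistency.
Variables (R : fieldType) (q m : nat) (a b : 'M[R]_(q, m)).

(* With [a = D(X)^T] and [b = D(Y)^T], [consistent a b S] is the SSD condition
   R(D(Y) S^T) <= R(D(X) S^T) on the subspace spanned by the rows of [S]. *)
Definition consistent r (S : 'M[R]_(r, q)) := (S *m b <= S *m a)%MS.

Definition max_consistent r p (U : 'M[R]_(r, q)) (W : 'M[R]_(p, q)) :=
  [/\ (W <= U)%MS, consistent W &
      forall r' (S : 'M[R]_(r', q)), consistent S -> (S <= U)%MS -> (S <= W)%MS].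

Lemma consistentP r (S : 'M[R]_(r, q)) :
  consistent S <-> forall s : 'rV_q, (s <= S)%MS ->
    exists2 t : 'rV_q, (t <= S)%MS & s *m b = t *m a.
Proof.
split=> [Scons s sS|St].
  have /submxP [u sbSa] : (s *m b <= S *m a)%MS by apply: submx_trans Scons; apply: submxMr.
  by exists (u *m S); rewrite ?submxMl // sbSa mulmxA.
apply/row_subP => i; rewrite row_mul.
have [t /submxP [u ->] ->] := St (row i S) (row_sub i S).
by rewrite -mulmxA submxMl.
Qed.

Lemma consistent_eqmx r1 r2 (S1 : 'M[R]_(r1, q)) (S2 : 'M[R]_(r2, q)) :
  (S1 :=: S2)%MS -> consistent S1 = consistent S2.
Proof. by move=> eqS; rewrite /consistent (eqmxMr b eqS) (eqmxMr a eqS). Qed.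

Lemma consistentM p (Z : 'M[R]_(p, q)) r (S : 'M[R]_(r, p)) :
  consistent (S *m Z) = (S *m (Z *m b) <= S *m (Z *m a))%MS.
Proof. by rewrite /consistent !mulmxA. Qed.

Lemma max_consistent_eqmx r1 r2 p (U : 'M[R]_(r1, q)) (U' : 'M[R]_(r2, q)) (W : 'M[R]_(p, q)) :
  max_consistent U W -> (U :=: U')%MS -> consistent U' -> (W :=: U')%MS.
Proof.
by case=> WU _ maxW eqU U'cons; apply/eqmxP; rewrite -eqU WU maxW // eqU.
Qed.

Lemma eqmx_max_consistent r1 r2 p (U : 'M[R]_(r1, q)) (U' : 'M[R]_(r2, q)) (W : 'M[R]_(p, q)) :
  (U :=: U')%MS -> max_consistent U W -> max_consistent U' W.
Proof.
move=> eqU [WU Wcons maxW]; split; rewrite -?eqU // => r S Scons.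
by rewrite -eqU; apply: maxW.
Qed.

Hypotheses (a_free : row_free a) (b_free : row_free b).

(* Both sides have rank [\rank S], so the inclusion is an equality. *)
Lemma consistent_eq r (S : 'M[R]_(r, q)) : consistent S -> (S *m b == S *m a)%MS.
Proof.
move=> Scons; apply/andP; split => //.
by rewrite -(mxrank_leqif_sup Scons).2 !mxrankMfree.
Qed.

End Consistency.

Lemma max_consistentM (R : fieldType) q m p (a b : 'M[R]_(q, m)) (Z : 'M[R]_(p, q))
    r1 r2 (U : 'M[R]_(r1, p)) (W : 'M[R]_(r2, p)) :
  max_consistent (Z *m a) (Z *m b) U W -> max_consistent a b (U *m Z) (W *m Z).
Proof.
case=> WU Wcons maxW; split; first exact: submxMr.
  by rewrite consistentM.
move=> r S Scons /submxP [X defS]; rewrite defS mulmxA submxMr // maxW ?submxMl //.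
by rewrite /consistent -!consistentM -mulmxA -defS.
Qed.

Section SSDCorrectness.
Variables (R : fieldType) (m q : nat) (A B : 'M[R]_(m, q)).
Hypotheses (A_free : row_free A^T) (B_free : row_free B^T).

Lemma consistent_kernel r (S : 'M[R]_(r, q)) s :
  consistent A^T B^T S -> (s <= S)%MS ->
  exists t : 'rV_q, row_mx A B *m col_mx s^T t^T = 0.
Proof.
move=> /(consistent_eq A_free B_free) /andP [_ SaSb] sS.
have /submxP [u su] : (s *m A^T <= B^T)%MS.
  exact: submx_trans (submxMr _ sS) (submx_trans SaSb (submxMl _ _)).
have trM (C : 'M[R]_(m, q)) (w : 'rV_q) : C *m w^T = (w *m C^T)^T.
  by rewrite trmx_mul trmxK.
by exists (- u); rewrite mul_row_col !trM su mulNmx linearN /= addrN.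
Qed.

Lemma consistent_trivial_ker r (S : 'M[R]_(r, q)) :
  (forall v : 'cV_(q + q), row_mx A B *m v = 0 -> v = 0) ->
  consistent A^T B^T S -> S = 0.
Proof.
move=> ker0 Scons; apply/row_matrixP => i; rewrite row0.
have [t /ker0 /eqP] := consistent_kernel Scons (row_sub i S).
by rewrite col_mx_eq0 => /andP [/eqP s0 _]; rewrite -[row i S]trmxK s0 trmx0.
Qed.

Section NullspaceBasis.
Variables (p : nat) (Z : 'M[R]_(q + q, p)).
Hypothesis Zbasis : nullspace_basis (row_mx A B) Z.

(* A kernel of dimension at least [q] forces [\rank (row_mx A B) = q = \rank A]. *)
Lemma large_kernel_consistent : (q <= p)%N -> consistent A^T B^T 1%:M.
Proof.
move=> le_qp; rewrite /consistent !mul1mx.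
have Zfree : \rank Z^T = p by apply/eqP; case: Zbasis => /lin_indep_colsE.
have /mxrankS : (Z^T <= kermx (row_mx A B)^T)%MS.
  by apply/sub_kermxP; rewrite -trmx_mul (nullspace_basis_mul0 Zbasis) trmx0.
rewrite mxrank_ker Zfree => le_p_ker.
have /andP [sA sB] : (A^T <= (row_mx A B)^T)%MS && (B^T <= (row_mx A B)^T)%MS.
  by rewrite -col_mx_sub tr_row_mx.
apply: submx_trans sB _; rewrite -(mxrank_leqif_sup sA).2.
have := leq_trans le_qp le_p_ker; rewrite leq_subRL ?rank_leq_row // leq_add2r.
by rewrite eqn_leq mxrankS //= (eqP A_free).
Qed.

Lemma nullspace_basis_usub_free : row_free (usubmx Z)^T.
Proof.
case: (Zbasis) => Zindep _; apply/lin_indep_colsE => c Zuc0.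
have /lin_indep_colsE Binj := B_free.
have Zc : Z *m c = col_mx 0 (dsubmx Z *m c) by rewrite -Zuc0 -mul_col_mx vsubmxK.
have : row_mx A B *m (Z *m c) = 0 by rewrite mulmxA (nullspace_basis_mul0 Zbasis) mul0mx.
rewrite Zc mul_row_col mulmx0 add0r => /Binj Zdc0.
by apply: Zindep; rewrite Zc Zdc0 col_mx0.
Qed.

Lemma consistent_sub_usub r (S : 'M[R]_(r, q)) :
  consistent A^T B^T S -> (S <= (usubmx Z)^T)%MS.
Proof.
move=> Scons; apply/row_subP => i.
have [t /(proj1 (proj2 Zbasis _)) [c /(congr1 usubmx)]] := consistent_kernel Scons (row_sub i S).
by rewrite col_mxKu -mul_usub_mx => /(congr1 trmx); rewrite trmxK trmx_mul => ->; apply: submxMl.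
Qed.

End NullspaceBasis.
End SSDCorrectness.

Lemma row_free_mul (R : fieldType) m n p (X : 'M[R]_(m, n)) (Y : 'M[R]_(n, p)) :
  row_free X -> row_free Y -> row_free (X *m Y).
Proof. by move=> Xfree Yfree; rewrite /row_free mxrankMfree. Qed.

Lemma ssd_run_max_consistent (R : fieldType) m q0 q (C : 'M[R]_(q0, q)) (A B : 'M[R]_(m, q)) res :
  ssd_run C A B res -> row_free A^T -> row_free B^T ->
  exists E : 'M[R]_(q, projT1 res),
    [/\ projT2 res = C *m E, row_free E^T & max_consistent A^T B^T 1%:M E^T].
Proof.
elim=> {q C A B res} [q C A B ker0 | q C A B p Z _ Zbasis le_qp |
                      q C A B p Z res _ Zbasis _ _ IH] Afree Bfree.
- exists 0; split; rewrite ?mulmx0 // ?trmx0; first by rewrite -row_leq_rank.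
  split; rewrite ?sub0mx // /consistent ?mul0mx ?sub0mx // => r S Scons _.
  by rewrite (consistent_trivial_ker Afree Bfree ker0 Scons) sub0mx.
- exists 1%:M; split; rewrite ?mulmx1 // trmx1; first by rewrite row_free_unit unitmx1.
  split=> [||r S _ //]; first exact: submx1.
  apply: (large_kernel_consistent Afree Zbasis le_qp).
- set Zu := usubmx Z; have Zufree := nullspace_basis_usub_free Bfree Zbasis.
  have [||E [resE Efree]] := IH; rewrite ?trmx_mul ?row_free_mul //.
  move=> /max_consistentM [WU Wcons maxW]; exists (Zu *m E).
  split; rewrite ?resE ?mulmxA // trmx_mul ?row_free_mul //.
  split; rewrite ?submx1 // => r S Scons _.
  by rewrite maxW // mul1mx (consistent_sub_usub Afree Bfree Zbasis).
Qed.

Section SnapshotData.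
Variable R : fieldType.

Lemma rows_in_submx m1 m2 n (A : 'M[R]_(m1, n)) (B : 'M[R]_(m2, n)) :
  rows_in A B -> (A <= B)%MS.
Proof. by move=> AB; apply/row_subP => j; have [k ->] := AB j; apply: row_sub. Qed.

Lemma sub_row_mx_coef m1 m2 n1 n2 (P' : 'M[R]_(m1, n1)) (Q' : 'M[R]_(m1, n2))
    (P : 'M[R]_(m2, n1)) (Q : 'M[R]_(m2, n2)) :
  (row_mx P' Q' <= row_mx P Q)%MS -> exists X, P' = X *m P /\ Q' = X *m Q.
Proof. by case/submxP => X; rewrite mul_mx_row => /eq_row_mx; exists X. Qed.

Lemma row_free_tr_submx m1 m2 q (P' : 'M[R]_(m1, q)) (P : 'M[R]_(m2, q)) :
  (P' <= P)%MS -> row_free P'^T -> row_free P^T.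
Proof.
rewrite /row_free !mxrank_tr !eqn_leq !rank_leq_col /= => /mxrankS le_P'P.
by move/leq_trans; apply.
Qed.

Variables (q m1 m2 : nat) (P' Q' : 'M[R]_(m1, q)) (P Q : 'M[R]_(m2, q)).
Hypothesis subPQ : (row_mx P' Q' <= row_mx P Q)%MS.

Lemma agree_submx (s t : 'rV[R]_q) : s *m Q^T = t *m P^T -> s *m Q'^T = t *m P'^T.
Proof.
have [X [-> ->]] := sub_row_mx_coef subPQ.
by rewrite !trmx_mul !mulmxA => ->.
Qed.

Lemma consistent_submx r (S : 'M[R]_(r, q)) : consistent P^T Q^T S -> consistent P'^T Q'^T S.
Proof.
move=> /consistentP Scons; apply/consistentP => s sS.
by have [t tS /agree_submx] := Scons s sS; exists t.
Qed.

End SnapshotData.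

Lemma agree_cover (R : fieldType) M N q (Nloc : 'I_M -> nat)
    (Pl Ql : forall l, 'M[R]_(Nloc l, q)) (P Q : 'M[R]_(N, q)) (s t : 'rV[R]_q) :
  (forall k : 'I_N, exists l (j : 'I_(Nloc l)),
     row j (row_mx (Pl l) (Ql l)) = row k (row_mx P Q)) ->
  (forall l, s *m (Ql l)^T = t *m (Pl l)^T) -> s *m Q^T = t *m P^T.
Proof.
move=> cover agree; apply: trmx_inj; rewrite !trmx_mul !trmxK.
apply/row_matrixP => k; have [l [j jk]] := cover k.
have sub_k : (row_mx (row k P) (row k Q) <= row_mx (Pl l) (Ql l))%MS.
  by rewrite -row_row_mx -jk row_sub.
move: (agree_submx sub_k (agree l)) => /(congr1 trmx).
by rewrite !trmx_mul !trmxK !row_mul.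
Qed.

Section Signature.
Variables (R : fieldType) (M q : nat) (Nloc : 'I_M -> nat).
Variables (Pl Ql : forall l, 'M[R]_(Nloc l, q)) (Ns : nat) (Ps Qs : 'M[R]_(Ns, q)).
Hypotheses (sig_sub : forall l, (row_mx Ps Qs <= row_mx (Pl l) (Ql l))%MS)
           (Ps_free : row_free Ps^T).
Variables (I : pred 'I_M) (V : 'I_M -> 'M[R]_q).
Hypothesis V_cons : forall l, I l -> consistent (Pl l)^T (Ql l)^T (V l).

(* The signature data, shared by all agents, pin down the witness [t]. *)
Lemma bigcap_consistent_agree i (s : 'rV[R]_q) : I i -> (s <= \bigcap_(l | I l) V l)%MS ->
  exists2 t, (t <= \bigcap_(l | I l) V l)%MS &
             forall l, I l -> s *m (Ql l)^T = t *m (Pl l)^T.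
Proof.
move=> Ii /sub_bigcapmxP sV.
have [t _ sti] := proj1 (consistentP _ _ _) (V_cons Ii) s (sV i Ii).
suff tl : forall l, I l -> (t <= V l)%MS /\ s *m (Ql l)^T = t *m (Pl l)^T.
  by exists t => [|l /tl []//]; apply/sub_bigcapmxP => l /tl [].
move=> l Il; have [tl tlV stl] := proj1 (consistentP _ _ _) (V_cons Il) s (sV l Il).
suff -> : t = tl by [].
apply: (row_free_inj Ps_free).
by rewrite -(agree_submx (sig_sub i) sti) (agree_submx (sig_sub l) stl).
Qed.

Lemma consistent_bigcap i : I i -> consistent (Pl i)^T (Ql i)^T (\bigcap_(l | I l) V l)%MS.
Proof.
move=> Ii; apply/consistentP => s /(bigcap_consistent_agree Ii) [t tV agree].
by exists t => //; apply: agree.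
Qed.

Lemma consistent_bigcap_cover N (P Q : 'M[R]_(N, q)) (i : 'I_M) :
  (forall k : 'I_N, exists l (j : 'I_(Nloc l)),
     row j (row_mx (Pl l) (Ql l)) = row k (row_mx P Q)) ->
  (forall l, I l) -> consistent P^T Q^T (\bigcap_(l | I l) V l)%MS.
Proof.
move=> cover Iall; apply/consistentP => s /(bigcap_consistent_agree (Iall i)) [t tV agree].
by exists t => //; apply: (agree_cover cover) => l; apply: agree.
Qed.

End Signature.

Section Reachability.
Variables (T : finType) (e : rel T).

Fixpoint reach_within k l i : bool :=
  if k is k'.+1 then [exists j, ((j == i) || e j i) && reach_within k' l j] else l == i.

Lemma reach_withinS k l i : reach_within k l i -> reach_within k.+1 l i.
Proof. by move=> lki; apply/existsP; exists i; rewrite eqxx. Qed.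

Lemma reach_within_mono k k' l i :
  (k <= k')%N -> reach_within k l i -> reach_within k' l i.
Proof.
move=> /subnK <-; elim: (k' - k)%N => // n IH /IH.
by rewrite addSn; apply: reach_withinS.
Qed.

Lemma reach_within_refl k i : reach_within k i i.
Proof. by apply: (@reach_within_mono 0) => //=. Qed.

Lemma reach_within_cons k l x i :
  e l x -> reach_within k x i -> reach_within k.+1 l i.
Proof.
elim: k i => [|k IH] i lx /=.
  by move=> /eqP <-; apply/existsP; exists l; rewrite lx orbT eqxx.
case/existsP => j /andP [ji xkj]; apply/existsP; exists j.
by rewrite ji; apply: IH.
Qed.

Lemma bigcap_reach_withinS (R : fieldType) n (V : T -> 'M[R]_n) k i :
  (\bigcap_(j | (j == i) || e j i) \bigcap_(l | reach_within k l j) V l :=: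
   \bigcap_(l | reach_within k.+1 l i) V l)%MS.
Proof.
apply/eqmxP/andP; split; apply/sub_bigcapmxP.
  move=> l /existsP [j /andP [ji lkj]].
  by apply: (bigcapmx_inf j) ji _; apply: (bigcapmx_inf l) lkj _.
move=> j ji; apply/sub_bigcapmxP => l lkj; apply: (bigcapmx_inf l) => //.
by apply/existsP; exists j; rewrite ji.
Qed.

End Reachability.

Lemma dpath_len_reach_within M (e : rel 'I_M) l i k : dpath_len e l i k -> reach_within e k l i.
Proof.
case=> s [<- [lsp <-]] {k i}; elim: s l lsp => [|x s IH] l /=; first by rewrite eqxx.
by case/andP => lx xsp; apply: (reach_within_cons lx); apply: IH.
Qed.


Section PSSD.
Variables (R : fieldType) (Nd M : nat) (e : rel 'I_M) (Nloc : 'I_M -> nat).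
Variables (DXl DYl : forall i, 'M[R]_(Nloc i, Nd)) (Ns : nat) (DXs DYs : 'M[R]_(Ns, Nd)).
Hypotheses (sig_sub : forall i, (row_mx DXs DYs <= row_mx (DXl i) (DYl i))%MS)
           (DXs_free : row_free DXs^T) (DYs_free : row_free DYs^T).
Variables (C : nat -> 'I_M -> {p : nat & 'M[R]_(Nd, p)}) (flag : nat -> 'I_M -> bool).
Hypothesis run : PSSD_run e DXl DYl C flag.

Local Notation Ct k i := (projT2 (C k i))^T.
Local Notation local_consistent i := (consistent (DXl i)^T (DYl i)^T).

Lemma local_data_free i : row_free (DXl i)^T /\ row_free (DYl i)^T.
Proof.
have [X [defXs defYs]] := sub_row_mx_coef (sig_sub i).
split; [apply: row_free_tr_submx DXs_free | apply: row_free_tr_submx DYs_free];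
  by rewrite ?defXs ?defYs submxMl.
Qed.

Lemma pssd_step k i : exists p (F : 'M[R]_(Nd, p)),
  [/\ row_free F^T,
      max_consistent (DXl i)^T (DYl i)^T (\bigcap_(j | (j == i) || e j i) <<Ct k j>>)%MS F^T &
      if (p < ncols (C k i))%N then C k.+1 i = existT _ p F /\ flag k.+1 i = false
      else C k.+1 i = C k i /\ flag k.+1 i = true].
Proof.
have [_ /(_ k i) [p [Dk [Ek [Dbasis [Essd Cnext]]]]]] := run.
have in_nbhd v : (forall j, j = i \/ e j i -> in_range (projT2 (C k j)) v) <->
            (v^T <= \bigcap_(j | (j == i) || e j i) <<Ct k j>>)%MS.
  rewrite -in_range_bigcap; split=> inC j ji; apply: inC.
    by case/orP: ji => [/eqP|]; [left | right].
  by case: ji => [->|]; rewrite ?eqxx // orbC => ->.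
have [Dfree DU] := basis_ofE in_nbhd Dbasis; have [DXfree DYfree] := local_data_free i.
have [||E [resE Efree Emax]] := ssd_run_max_consistent Essd; try by rewrite trmx_mul row_free_mul.
move: Emax; rewrite !trmx_mul => /max_consistentM; rewrite mul1mx -trmx_mul.
move=> /(eqmx_max_consistent DU) Fmax; rewrite mul1mx in resE.
exists (projT1 Ek), (Dk *m projT2 Ek).
by split; rewrite // resE // trmx_mul row_free_mul.
Qed.

Lemma pssd_first_step i : row_free (Ct 1 i) /\ max_consistent (DXl i)^T (DYl i)^T 1%:M (Ct 1 i).
Proof.
have [p [F [Ffree Fmax]]] := pssd_step 0 i; have [C0 _] := run.
have cap1 : (\bigcap_(j | (j == i) || e j i) <<Ct 0 j>>)%MS = 1%:M.
  by rewrite big1 // => j _; rewrite (proj1 (C0 j)) /= trmx1 genmx1.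
rewrite cap1 in Fmax; case: ifP => [_ [-> _] // | ge_p [-> _]].
rewrite (proj1 (C0 i)) /= trmx1; split; first by rewrite row_free_unit unitmx1.
have F1 : (F^T :=: 1%:M)%MS.
  apply/eqmxP; rewrite submx1 sub1mx /row_full eqn_leq rank_leq_col /=.
  by move: ge_p; rewrite (eqP Ffree) /ncols (proj1 (C0 i)) /= => /negbT; rewrite -leqNgt.
by case: Fmax => _ Fcons _; split=> //; rewrite -(consistent_eqmx _ _ F1).
Qed.

(* [Vmax l] is R(C_1^l), and [Vcap k i] intersects it over the agents [l] that reach
   [i] in at most [k] steps. *)
Local Notation Vmax l := (<<Ct 1 l>>)%MS.
Local Notation Vcap k i := (\bigcap_(l | reach_within e k l i) Vmax l)%MS.

Lemma Vmax_consistent l : local_consistent l (Vmax l).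
Proof. by rewrite (consistent_eqmx _ _ (genmxE _)); case: (pssd_first_step l).2. Qed.

Lemma sub_Vmax l r (X : 'M[R]_(r, Nd)) : local_consistent l X -> (X <= Vmax l)%MS.
Proof. by case: (pssd_first_step l).2 => _ _ maxV /maxV; rewrite genmxE submx1; apply. Qed.

Lemma Vcap_consistent k i : local_consistent i (Vcap k i).
Proof.
apply: (consistent_bigcap (I := fun l => reach_within e k l i) sig_sub DXs_free).
  by move=> l _; apply: Vmax_consistent.
exact: reach_within_refl.
Qed.

Lemma Vcap_subS k i : (Vcap k.+1 i <= Vcap k i)%MS.
Proof.
by apply/sub_bigcapmxP => l lki; apply: (bigcapmx_inf l) (reach_withinS lki) _.
Qed.

Lemma pssd_step_Vcap k i : (forall j, (Ct k.+1 j :=: Vcap k j)%MS) ->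
  exists p (F : 'M[R]_(Nd, p)),
  [/\ row_free F^T, (F^T :=: Vcap k.+1 i)%MS &
      if (p < ncols (C k.+1 i))%N then C k.+2 i = existT _ p F /\ flag k.+2 i = false
      else C k.+2 i = C k.+1 i /\ flag k.+2 i = true].
Proof.
move=> CV; have [p [F [Ffree Fmax Cnext]]] := pssd_step k.+1 i.
exists p, F; split=> //; apply: (max_consistent_eqmx Fmax) (Vcap_consistent _ _).
have genVcap j : <<Vcap k j>>%MS = Vcap k j.
  by rewrite genmx_bigcap; apply: eq_bigr => l _; rewrite genmx_id.
apply: eqmx_trans (bigcap_reach_withinS _ _ k i).
rewrite (eq_bigr (fun j => Vcap k j)) // => j _.
by rewrite -genVcap; apply/genmxP/eqmxP; apply: CV.
Qed.

Lemma pssd_invariant k j : (Ct k.+1 j :=: Vcap k j)%MS /\ row_free (Ct k.+1 j).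
Proof.
elim: k j => [|k IH] j.
  split; last by case: (pssd_first_step j).
  by rewrite /= big_pred1_eq; apply: eqmx_sym; apply: genmxE.
have [p [F [Ffree FV]]] := pssd_step_Vcap j (fun j => (IH j).1).
case: ifP => [_ [-> _] | ge_p [-> _]] /=; first by split.
have [CV Cfree] := IH j; split=> //; apply: (eqmx_trans CV).
apply/eqmxP/andP; split; last exact: Vcap_subS.
rewrite -(mxrank_leqif_sup (Vcap_subS k j)).2 eqn_leq mxrankS ?Vcap_subS //=.
by rewrite -FV -CV (eqP Ffree) (eqP Cfree) leqNgt ge_p.
Qed.

Variables (N : nat) (DX DY : 'M[R]_(N, Nd)) (d : nat) (CSSD : {p : nat & 'M[R]_(Nd, p)}).
Hypotheses (local_sub : forall l, (row_mx (DXl l) (DYl l) <= row_mx DX DY)%MS)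
  (cover : forall k : 'I_N, exists l (j : 'I_(Nloc l)),
     row j (row_mx (DXl l) (DYl l)) = row k (row_mx DX DY))
  (diam : forall l i, reach_within e d l i)
  (DX_free : row_free DX^T) (DY_free : row_free DY^T) (Cssd : SSD DX DY CSSD).

Lemma Vcap_saturated k i : (d <= k)%N -> Vcap k i = Vcap d i.
Proof.
by move=> le_dk; apply: eq_bigl => l; rewrite diam (reach_within_mono le_dk (diam l i)).
Qed.

Lemma Vcap_limit i : (Vcap d i :=: (projT2 CSSD)^T)%MS.
Proof.
have [E [-> _ [_ Econs maxE]]] := ssd_run_max_consistent Cssd DX_free DY_free; rewrite mul1mx.
apply/eqmxP/andP; split.
  apply: maxE (submx1 _).
  apply: (consistent_bigcap_cover (I := fun l => reach_within e d l i) sig_sub DXs_free)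
    cover _ => //.
  by move=> l _; apply: Vmax_consistent.
by apply/sub_bigcapmxP => l _; apply/sub_Vmax/(consistent_submx (local_sub l) Econs).
Qed.

Lemma pssd_range_limit k i : (d < k)%N -> (Ct k i :=: (projT2 CSSD)^T)%MS.
Proof.
case: k => // k; rewrite ltnS => le_dk; have [CV _] := pssd_invariant k i.
by apply: eqmx_trans CV _; rewrite Vcap_saturated //; apply: Vcap_limit.
Qed.

Lemma pssd_data_limit k i : (d < k)%N -> (Ct k i *m DX^T :=: Ct k i *m DY^T)%MS.
Proof.
move=> lt_dk; have [E [resE _ [_ Econs _]]] := ssd_run_max_consistent Cssd DX_free DY_free.
apply: eqmx_sym; apply/eqmxP; apply: (consistent_eq DX_free DY_free).
by rewrite (consistent_eqmx _ _ (pssd_range_limit i lt_dk)) resE mul1mx.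
Qed.

Lemma pssd_flag_limit i : flag d.+2 i.
Proof.
have [p [F [Ffree FV]]] := pssd_step_Vcap i (fun j => (pssd_invariant d j).1).
case: ifP => [lt_p _ | _ [_ ->] //]; have [CV Cfree] := pssd_invariant d i.
by move: lt_p; rewrite /ncols -(eqP Cfree) -(eqP Ffree) FV CV Vcap_saturated ?ltnn.
Qed.

End PSSD.

Unset Implicit Arguments.
Set Strict Implicit.

Theorem theorem5p3
  (R : realType) (n Nd N : nat)
  (Mset : 'rV[R]_n -> Prop) (T : 'rV[R]_n -> 'rV[R]_n)
  (D : 'rV[R]_n -> 'rV[R]_Nd)
  (X Y : 'M[R]_(N, n))
  (M : nat) (Nloc : 'I_M -> nat) (Xl Yl : forall i : 'I_M, 'M[R]_(Nloc i, n))
  (Ns : nat) (Xs Ys : 'M[R]_(Ns, n))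
  (e : rel 'I_M) (d : nat)
  (C : nat -> 'I_M -> {p : nat & 'M[R]_(Nd, p)}) (flag : nat -> 'I_M -> bool)
  (CSSD : {p : nat & 'M[R]_(Nd, p)}) :
  (* data: T maps M into M, y_j = T(x_j) with x_j in M *)
  (forall x, Mset x -> Mset (T x)) ->
  (forall j : 'I_N, Mset (row j X) /\ row j Y = T (row j X)) ->
  full_col_rank (Dmat D X) -> full_col_rank (Dmat D Y) ->
  (* each agent holds a subset of the snapshot pairs *)
  (forall (i : 'I_M) (j : 'I_(Nloc i)), exists k : 'I_N,
      row j (Xl i) = row k X /\ row j (Yl i) = row k Y) ->
  (* the union of the agents' rows of [D(X_i), D(Y_i)] equals the rows of [D(X), D(Y)] *)
  (forall i : 'I_M, rows_in (row_mx (Dmat D (Xl i)) (Dmat D (Yl i))) (row_mx (Dmat D X) (Dmat D Y))) ->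
  (forall k : 'I_N, exists (i : 'I_M) (j : 'I_(Nloc i)),
      row j (row_mx (Dmat D (Xl i)) (Dmat D (Yl i))) = row k (row_mx (Dmat D X) (Dmat D Y))) ->
  (* signature matrices *)
  full_col_rank (Dmat D Xs) -> full_col_rank (Dmat D Ys) ->
  (forall i : 'I_M, rows_in (row_mx (Dmat D Xs) (Dmat D Ys)) (row_mx (Dmat D (Xl i)) (Dmat D (Yl i)))) ->
  (* constant strongly connected digraph with diameter d *)
  strongly_connected e -> diameter e d ->
  (* an execution of P-SSD, and C_SSD = SSD(D(X), D(Y)) *)
  PSSD_run e (fun i => Dmat D (Xl i)) (fun i => Dmat D (Yl i)) C flag ->
  SSD (Dmat D X) (Dmat D Y) CSSD ->
  (forall (k : nat) (i : 'I_M), (d.+1 <= k)%N ->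
      range_eq (projT2 (C k i)) (projT2 CSSD) /\
      range_eq (Dmat D X *m projT2 (C k i)) (Dmat D Y *m projT2 (C k i))) /\
  (forall i : 'I_M, flag d.+2 i = true).
Proof.
move=> _ _ /full_col_rankE DX_free /full_col_rankE DY_free _ loc_in cover
  /full_col_rankE DXs_free /full_col_rankE DYs_free sig_in _ [diam _] run Cssd.
have sig_sub i := rows_in_submx (sig_in i).
have loc_sub i := rows_in_submx (loc_in i).
have reach_d l i : reach_within e d l i.
  by have [k le_kd /dpath_len_reach_within] := diam l i; apply: reach_within_mono.
split=> [k i lt_dk | i]; last exact: (pssd_flag_limit sig_sub DXs_free DYs_free run reach_d).
have limit := pssd_range_limit sig_sub DXs_free DYs_free run loc_sub cover reach_d
  DX_free DY_free Cssd.
have data_limit := pssd_data_limit sig_sub DXs_free DYs_free run loc_sub cover reach_d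
  DX_free DY_free Cssd.
by split; apply: range_eqE; rewrite ?trmx_mul; [apply: limit | apply: data_limit].
Qed.
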